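(* Let $P : E \to B$ be a functor between finite categories which is both fibered in groupoids and cofibered in groupoids, and suppose $B$ is connected. Let $F = P^{-1}(b)$ be the fiber category over an object $b$ of $B$ (all fibers are equivalent, so the choice of $b$ does not matter). If $E$ and $B$ have Euler characteristics, then $F$ has Euler characteristic and \[ \chi(E) = \chi(B)\,\chi(F). \]
   Context: Matrices and Euler characteristic: for finite sets $I,J$ and $\zeta : I\times J \to \mathbb{Q}$, a weighting is $k^{\bullet} : J \to \mathbb{Q}$ with $\sum_j \zeta(i,j)k^j = 1$ for all $i$; a coweighting is $k_{\bullet} : I\to\mathbb{Q}$ with $\sum_i k_i\zeta(i,j)=1$ for all $j$. $\zeta$ has Euler characteristic if it has both, and then $|\zeta| = \sum_j k^j = \sum_i k_i$ (independent of choices). A finite category $A$ (finitely many objects and morphisms) has similarity matrix $\zeta_A(x,y) = \#A(x,y)$ on $\mathrm{ob}(A)\times \mathrm{ob}(A)$; $A$ has Euler characteristic if $\zeta_A$ does, and $\chi(A) = |\zeta_A|$. A morphism $f : e \to e'$ in $E$ is cartesian (for $P$) if for every $g : e'' \to e'$ in $E$ and every $h : P(e'') \to P(e)$ in $B$ with $P(f)\circ h = P(g)$ there is a unique $\tilde h : e'' \to e$ with $P(\tilde h) = h$ and $f \circ \tilde h = g$. $P$ is fibered in groupoids if every morphism of $E$ is cartesian and every morphism $f : b \to P(e)$ in $B$ has a lift $\tilde f : e' \to e$ in $E$ with $P(\tilde f) = f$. Cofibered in groupoids is the dual notion (reverse all morphisms). The fiber category $P^{-1}(b)$ is the subcategory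 of $E$ with objects $e$ with $P(e) = b$ and morphisms $f$ with $P(f) = \mathrm{id}_b$. A category is connected if any two objects are joined by a finite zigzag of morphisms. *)

From HB Require Import structures.
From mathcomp Require Import all_boot all_order all_algebra.
From Stdlib Require Import ClassicalEpsilon.
Set Implicit Arguments. Unset Strict Implicit. Unset Printing Implicit Defensive.
Import GRing.Theory Num.Theory.
Local Open Scope ring_scope.

Definition is_weighting (I J : finType) (zeta : I -> J -> rat) (k : J -> rat) :=
  forall i : I, \sum_(j : J) zeta i j * k j = 1.

Definition is_coweighting (I J : finType) (zeta : I -> J -> rat) (k : I -> rat) :=
  forall j : J, \sum_(i : I) k i * zeta i j = 1.

Definition has_euler (I J : finType) (zeta : I -> J -> rat) :=
  (exists k, is_weighting zeta k) /\ (exists k, is_coweighting zeta k).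

(* |zeta| := sum_j k^j for a (chosen) weighting k^.; meaningful when
   zeta has Euler characteristic (then independent of the choice). *)
Definition euler (I J : finType) (zeta : I -> J -> rat) : rat :=
  epsilon (inhabits 0)
    (fun x => exists k, is_weighting zeta k /\ \sum_(j : J) k j = x).

Record fcat := FCat {
  ob : finType;
  hom : ob -> ob -> finType;
  idm : forall x, hom x x;
  comp : forall x y z, hom y z -> hom x y -> hom x z;
  comp_id_l : forall x y (f : hom x y), comp (idm y) f = f;
  comp_id_r : forall x y (f : hom x y), comp f (idm x) = f;
  comp_assoc : forall x y z w (h : hom z w) (g : hom y z) (f : hom x y),
      comp h (comp g f) = comp (comp h g) f
}.
Arguments idm {f} x : rename.
Arguments comp {f x y z} _ _ : rename.

Definition zeta (A : fcat) (x y : ob A) : rat := (#|hom x y|)%:R.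

Definition fcat_has_euler (A : fcat) := has_euler (@zeta A).
Definition chi (A : fcat) : rat := euler (@zeta A).

(* morphisms of a category viewed with their endpoints, to compare
   morphisms whose endpoints are only propositionally equal *)
Definition tmor (A : fcat) (x y : ob A) (f : hom x y) :
  {p : ob A * ob A & hom p.1 p.2} :=
  Tagged (fun p : ob A * ob A => hom p.1 p.2) (f : hom (x, y).1 (x, y).2).

Definition fcat_connected (A : fcat) :=
  forall x y : ob A,
    connect (fun a b : ob A => (0 < #|hom a b|)%N || (0 < #|hom b a|)%N) x y.

Record functor (C D : fcat) := Functor {
  fob : ob C -> ob D;
  fmor : forall x y, hom x y -> hom (fob x) (fob y);
  fmor_id : forall x, fmor (idm x) = idm (fob x);
  fmor_comp : forall x y z (g : hom y z) (f : hom x y),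
      fmor (comp g f) = comp (fmor g) (fmor f)
}.
Arguments fob {C D} _ _.
Arguments fmor {C D} _ {x y} _.

Section Fib.
Variables (E B : fcat) (P : functor E B).

Definition cartesian (e e' : ob E) (f : hom e e') :=
  forall (e'' : ob E) (g : hom e'' e') (h : hom (fob P e'') (fob P e)),
    comp (fmor P f) h = fmor P g ->
    exists! ht : hom e'' e, fmor P ht = h /\ comp f ht = g.

Definition cocartesian (e e' : ob E) (f : hom e e') :=
  forall (e'' : ob E) (g : hom e e'') (h : hom (fob P e') (fob P e'')),
    comp h (fmor P f) = fmor P g ->
    exists! ht : hom e' e'', fmor P ht = h /\ comp ht f = g.

Definition fibered_in_groupoids :=
  (forall (e e' : ob E) (f : hom e e'), cartesian f) /\
  (forall (e : ob E) (b : ob B) (f : hom b (fob P e)),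
     exists (e' : ob E) (ft : hom e' e), tmor (fmor P ft) = tmor f).

Definition cofibered_in_groupoids :=
  (forall (e e' : ob E) (f : hom e e'), cocartesian f) /\
  (forall (e : ob E) (b : ob B) (f : hom (fob P e) b),
     exists (e' : ob E) (ft : hom e e'), tmor (fmor P ft) = tmor f).

(* The fiber category P^{-1}(b): objects e with P e = b, morphisms f with
   P f = id_b.  We only need its similarity matrix. *)
Definition fiber_ob (b : ob B) := {e : ob E | fob P e == b}.

Definition zeta_fiber (b : ob B) (x y : fiber_ob b) : rat :=
  (#|[pred f : hom (val x) (val y) | tmor (fmor P f) == tmor (idm b)]|)%:R.

End Fib.
Arguments zeta_fiber {E B} P b x y.
Arguments fibered_in_groupoids {E B} P.
Arguments cofibered_in_groupoids {E B} P.

From HB Require Import structures.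
From mathcomp Require Import all_boot all_order all_algebra.
From Stdlib Require Import Eqdep_dec ClassicalEpsilon.
Import GRing.Theory Num.Theory.
Local Open Scope ring_scope.
Set Implicit Arguments. Unset Strict Implicit. Unset Printing Implicit Defensive.

(* Call a morphism of E vertical if P sends it to an identity, and let d(e)
   and d'(e) count the vertical morphisms out of and into e.  Composing with
   a cocartesian lift f0 of h : P e -> b identifies the vertical morphisms out
   of the target of f0 with the morphisms out of e lying over h.  Hence d is
   constant along vertical morphisms, 1/d is a weighting of every fiber and,
   for a weighting w of B, e |-> w(P e)/d(e) is a weighting of E; dually 1/d'
   is a coweighting of every fiber.  So chi(P^-1 b) = sum_{P e = b} 1/d(e)
   = sum_{P e = b} 1/d'(e).  Counting the morphisms over h : b1 -> b2 weighted
   by 1/(d'(source) d(target)) in two ways shows that the second sum at b1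
   equals the first sum at b2, so chi(P^-1 b) does not depend on b when B is
   connected, and summing the weighting of E fiber by fiber gives
   chi E = sum_b w(b) chi(P^-1 b) = chi B * chi(P^-1 b). *)

Lemma weighting_coweighting_sum (I J : finType) (z : I -> J -> rat) k c :
  is_weighting z k -> is_coweighting z c -> \sum_j k j = \sum_i c i.
Proof.
move=> zk cz; transitivity (\sum_j (\sum_i c i * z i j) * k j).
  by apply: eq_bigr => j _; rewrite cz mul1r.
under eq_bigr do rewrite mulr_suml.
rewrite exchange_big; apply: eq_bigr => i _.
by rewrite -[RHS]mulr1 -(zk i) mulr_sumr; apply: eq_bigr => j _; rewrite mulrA.
Qed.

Lemma euler_weighting (I J : finType) (z : I -> J -> rat) k :
  is_weighting z k -> (exists c, is_coweighting z c) -> euler z = \sum_j k j.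
Proof.
move=> zk [c cz]; rewrite /euler.
have ex_sum : exists x, exists k', is_weighting z k' /\ \sum_j k' j = x.
  by exists (\sum_j k j), k.
case: (epsilon_spec (inhabits 0) _ ex_sum) => k' [zk' <-].
by rewrite (weighting_coweighting_sum zk' cz) (weighting_coweighting_sum zk cz).
Qed.

Lemma sum_indicator_card (T : finType) (p : pred T) :
  \sum_(t : T) (p t)%:R = #|[pred t | p t]|%:R :> rat.
Proof.
rewrite -sum1_card natr_sum [RHS]big_mkcond /=; apply: eq_bigr => t _.
by rewrite inE; case: (p t).
Qed.

Lemma sum_div_rowsum (T : finType) (n : T -> T -> nat) (x : T) :
  (0 < n x x)%N ->
  (forall y, 0 < n x y -> \sum_z n y z = \sum_z n x z)%N ->
  \sum_y (n x y)%:R / (\sum_z n y z)%:R = 1 :> rat.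
Proof.
move=> nxx_gt0 rowsum_const.
rewrite (eq_bigr (fun y => (n x y)%:R / (\sum_z n x z)%:R)); last first.
  move=> y _; case: (posnP (n x y)) => [-> | /rowsum_const -> //].
  by rewrite !mul0r.
rewrite -mulr_suml -natr_sum divff // pnatr_eq0 -lt0n.
by rewrite (bigD1 x) //= (leq_trans nxx_gt0 (leq_addr _ _)).
Qed.

Section TaggedMorphisms.
Variable A : fcat.

Lemma tmor_endpoints (x y x' y' : ob A) (f : hom x y) (g : hom x' y') :
  tmor f = tmor g -> x = x' /\ y = y'.
Proof. by move=> /(congr1 tag) [-> ->]. Qed.

Lemma tmor_inj (x y : ob A) (f g : hom x y) : tmor f = tmor g -> f = g.
Proof. exact: inj_pair2_eq_dec _ (@eq_comparable _) _ (x, y) f g. Qed.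

Lemma tmor_idm (x y : ob A) : x = y -> tmor (idm x) = tmor (idm y).
Proof. by move=> ->. Qed.

Lemma tmor_comp_idl (x y z : ob A) (a : hom y z) (b : hom x y) :
  tmor a = tmor (idm y) -> tmor (comp a b) = tmor b.
Proof.
move=> a_id; case: (tmor_endpoints a_id) => _ zy; subst z.
by rewrite (tmor_inj a_id) comp_id_l.
Qed.

Lemma tmor_comp_idr (x y z : ob A) (a : hom y z) (b : hom x y) :
  tmor b = tmor (idm y) -> tmor (comp a b) = tmor a.
Proof.
move=> b_id; case: (tmor_endpoints b_id) => xy _; subst x.
by rewrite (tmor_inj b_id) comp_id_r.
Qed.

Lemma exists_idm_cast (x y : ob A) : x = y ->
  exists h : hom x y, tmor h = tmor (idm x) /\ tmor h = tmor (idm y).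
Proof. by move=> <-; exists (idm x). Qed.

Lemma sum_hom_tmor_eq (x y : ob A) (g : hom x y) (F : ob A -> rat) :
  \sum_(z : ob A) \sum_(h : hom x z) (tmor g == tmor h)%:R * F z = F y.
Proof.
rewrite (bigD1 y) //= [X in _ + X]big1 ?addr0; last first.
  move=> z zy; apply: big1 => h _; case: eqP => [gh | _]; last by rewrite mul0r.
  by case: (tmor_endpoints gh) => _ yz; rewrite yz eqxx in zy.
rewrite (bigD1 g) //= eqxx mul1r big1 ?addr0 // => h hg.
case: eqP => [/tmor_inj gh | _]; last by rewrite mul0r.
by rewrite gh eqxx in hg.
Qed.

End TaggedMorphisms.

Section Fibration.
Variables (E B : fcat) (P : functor E B).

Definition vertical (x y : ob E) :=
  [pred g : hom x y | tmor (fmor P g) == tmor (idm (fob P x))].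
Definition nvert (x y : ob E) := #|vertical x y|.
Definition outdeg (x : ob E) := (\sum_y nvert x y)%N.
Definition indeg (y : ob E) := (\sum_x nvert x y)%N.

Lemma vertical_idm x y (g : hom x y) : g \in vertical x y ->
  [/\ fob P y = fob P x, tmor (fmor P g) = tmor (idm (fob P x)) &
      tmor (fmor P g) = tmor (idm (fob P y))].
Proof.
rewrite inE => /eqP g_id; case: (tmor_endpoints g_id) => _ Pyx.
by rewrite g_id Pyx.
Qed.

Lemma nvert_refl_gt0 x : (0 < nvert x x)%N.
Proof. by apply/card_gt0P; exists (idm x); rewrite inE fmor_id. Qed.

Lemma nvert0 x y : fob P y != fob P x -> nvert x y = 0%N.
Proof.
move=> Pyx; apply: eq_card0 => g; apply/negP => /vertical_idm [Pyx' _ _].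
by rewrite Pyx' eqxx in Pyx.
Qed.

Lemma fmor_vertical_eq x y (g1 g2 : hom x y) :
  g1 \in vertical x y -> g2 \in vertical x y -> fmor P g1 = fmor P g2.
Proof.
move=> /vertical_idm [_ g1_id _] /vertical_idm [_ g2_id _].
by apply: tmor_inj; rewrite g1_id g2_id.
Qed.

Definition sum_inv_outdeg (b : ob B) : rat :=
  \sum_(e | fob P e == b) (outdeg e)%:R^-1.
Definition sum_inv_indeg (b : ob B) : rat :=
  \sum_(e | fob P e == b) (indeg e)%:R^-1.

Hypothesis P_cart : forall (e e' : ob E) (f : hom e e'), cartesian P f.
Hypothesis P_lift : forall (e : ob E) (b : ob B) (f : hom b (fob P e)),
  exists (e' : ob E) (ft : hom e' e), tmor (fmor P ft) = tmor f.
Hypothesis P_cocart : forall (e e' : ob E) (f : hom e e'), cocartesian P f.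
Hypothesis P_colift : forall (e : ob E) (b : ob B) (f : hom (fob P e) b),
  exists (e' : ob E) (ft : hom e e'), tmor (fmor P ft) = tmor f.

Lemma card_over_from e e0 (f0 : hom e e0) z :
  #|[pred f : hom e z | tmor (fmor P f) == tmor (fmor P f0)]| = nvert e0 z.
Proof.
rewrite /nvert -(card_in_imset (f := fun k => comp k f0)).
  apply: eq_card => f; rewrite !inE; apply/eqP/imsetP.
  - move=> f_over; case: (tmor_endpoints f_over) => _ Pz.
    case: (exists_idm_cast (esym Pz)) => h [h_id _].
    have fac : comp h (fmor P f0) = fmor P f.
      by apply: tmor_inj; rewrite (tmor_comp_idl _ h_id) f_over.
    case: (P_cocart fac) => k [[Pk kf0] _].
    by exists k; rewrite // inE Pk h_id.
  - case=> k /vertical_idm [_ k_id _] ->.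
    by rewrite fmor_comp; apply: tmor_comp_idl.
move=> k1 k2 k1v k2v /= k12.
case: (P_cocart (esym (fmor_comp P k1 f0))) => k [_ k_uniq].
rewrite -(k_uniq k1 (conj erefl erefl)).
exact: k_uniq k2 (conj (fmor_vertical_eq k2v k1v) (esym k12)).
Qed.

Lemma outdeg_vertical x y (g : hom x y) : g \in vertical x y ->
  outdeg y = outdeg x.
Proof.
move=> /vertical_idm [_ g_id _]; apply: eq_bigr => z _.
rewrite -(card_over_from g z); apply: eq_card => f; by rewrite !inE g_id.
Qed.

Lemma sum_nvert_div_outdeg x :
  \sum_y (nvert x y)%:R / (outdeg y)%:R = 1 :> rat.
Proof.
apply: sum_div_rowsum (nvert_refl_gt0 x) _ => y /card_gt0P [g gv].
exact: outdeg_vertical gv.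
Qed.

Lemma sum_over_div_outdeg e b b' (h : hom b b') : fob P e = b ->
  \sum_e' \sum_(f : hom e e') (tmor (fmor P f) == tmor h)%:R / (outdeg e')%:R
  = 1 :> rat.
Proof.
move=> Peb; subst b; case: (P_colift h) => e0 [f0 f0h].
rewrite -[RHS](sum_nvert_div_outdeg e0); apply: eq_bigr => e' _.
by rewrite -mulr_suml sum_indicator_card -f0h -(card_over_from f0 e').
Qed.

Lemma weighting_lift (w : ob B -> rat) : is_weighting (@zeta B) w ->
  is_weighting (@zeta E) (fun e => w (fob P e) / (outdeg e)%:R).
Proof.
move=> Bw e; rewrite /zeta.
transitivity (\sum_e' \sum_(f : hom e e') \sum_b' \sum_(h : hom (fob P e) b')
    (tmor (fmor P f) == tmor h)%:R * (w b' / (outdeg e')%:R)).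
  apply: eq_bigr => e' _; rewrite mulr_natl -sumr_const; apply: eq_bigr => f _.
  by rewrite sum_hom_tmor_eq.
under eq_bigr do rewrite exchange_big.
under eq_bigr do under eq_bigr do rewrite exchange_big.
rewrite exchange_big; under eq_bigr do rewrite exchange_big.
rewrite -[RHS](Bw (fob P e)); apply: eq_bigr => b' _.
under eq_bigr do under eq_bigr do under eq_bigr do rewrite mulrCA.
under eq_bigr do under eq_bigr do rewrite -mulr_sumr.
under eq_bigr do rewrite -mulr_sumr (sum_over_div_outdeg _ erefl) mulr1.
by rewrite sumr_const mulr_natl.
Qed.

Lemma card_over_to e1 e (f1 : hom e1 e) z :
  #|[pred f : hom z e | tmor (fmor P f) == tmor (fmor P f1)]| = nvert z e1.
Proof.
rewrite /nvert -(card_in_imset (f := fun k => comp f1 k)).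
  apply: eq_card => f; rewrite !inE; apply/eqP/imsetP.
  - move=> f_over; case: (tmor_endpoints f_over) => Pz _.
    case: (exists_idm_cast Pz) => h [h_id h_id'].
    have fac : comp (fmor P f1) h = fmor P f.
      by apply: tmor_inj; rewrite (tmor_comp_idr _ h_id') f_over.
    case: (P_cart fac) => k [[Pk f1k] _].
    by exists k; rewrite // inE Pk h_id.
  - case=> k /vertical_idm [_ _ k_id] ->.
    by rewrite fmor_comp; apply: tmor_comp_idr.
move=> k1 k2 k1v k2v /= k12.
case: (P_cart (esym (fmor_comp P f1 k1))) => k [_ k_uniq].
rewrite -(k_uniq k1 (conj erefl erefl)).
exact: k_uniq k2 (conj (fmor_vertical_eq k2v k1v) (esym k12)).
Qed.

Lemma indeg_vertical x y (g : hom x y) : g \in vertical x y ->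
  indeg x = indeg y.
Proof.
move=> /vertical_idm [Pyx g_id _]; apply: eq_bigr => z _.
have [Pxz | Pxz] := eqVneq (fob P x) (fob P z); last by rewrite !nvert0 // Pyx.
rewrite -(card_over_to g z); apply: eq_card => f.
by rewrite !inE g_id (tmor_idm Pxz).
Qed.

Lemma sum_nvert_div_indeg y :
  \sum_x (nvert x y)%:R / (indeg x)%:R = 1 :> rat.
Proof.
apply: (sum_div_rowsum (n := fun a b => nvert b a)) (nvert_refl_gt0 y) _.
by move=> x /card_gt0P [g gv]; exact: indeg_vertical gv.
Qed.

Lemma sum_over_div_indeg e b b' (h : hom b b') : fob P e = b' ->
  \sum_e' \sum_(f : hom e' e) (tmor (fmor P f) == tmor h)%:R / (indeg e')%:R
  = 1 :> rat.
Proof.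
move=> Peb; subst b'; case: (P_lift h) => e1 [f1 f1h].
rewrite -[RHS](sum_nvert_div_indeg e1); apply: eq_bigr => e' _.
by rewrite -mulr_suml sum_indicator_card -f1h -(card_over_to f1 e').
Qed.

Lemma zeta_fiberE b (x y : fiber_ob P b) :
  zeta_fiber P b x y = (nvert (val x) (val y))%:R.
Proof.
congr (_%:R); apply: eq_card => f; by rewrite !inE (tmor_idm (eqP (valP x))).
Qed.

Lemma sum_fiber_ob b (F : ob E -> rat) :
  \sum_(x : fiber_ob P b) F (val x) = \sum_(e | fob P e == b) F e.
Proof. exact: esym (big_sub [pred e | fob P e == b] F). Qed.

Lemma fiber_weighting b :
  is_weighting (zeta_fiber P b) (fun y => (outdeg (val y))%:R^-1).
Proof.
move=> x; under eq_bigr do rewrite zeta_fiberE.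
rewrite (sum_fiber_ob b (fun e => (nvert (val x) e)%:R / (outdeg e)%:R)).
rewrite -[RHS](sum_nvert_div_outdeg (val x)).
rewrite [RHS](bigID (fun e => fob P e == b)) /= [X in _ + X]big1 ?addr0 //.
by move=> e Pe; rewrite nvert0 ?mul0r // (eqP (valP x)).
Qed.

Lemma fiber_coweighting b :
  is_coweighting (zeta_fiber P b) (fun x => (indeg (val x))%:R^-1).
Proof.
move=> y; under eq_bigr do rewrite zeta_fiberE mulrC.
rewrite (sum_fiber_ob b (fun e => (nvert e (val y))%:R / (indeg e)%:R)).
rewrite -[RHS](sum_nvert_div_indeg (val y)).
rewrite [RHS](bigID (fun e => fob P e == b)) /= [X in _ + X]big1 ?addr0 //.
by move=> e Pe; rewrite nvert0 ?mul0r // (eqP (valP y)) eq_sym.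
Qed.

Lemma fiber_has_euler b : has_euler (zeta_fiber P b).
Proof.
split; first by exists (fun y => (outdeg (val y))%:R^-1); exact: fiber_weighting.
by exists (fun x => (indeg (val x))%:R^-1); exact: fiber_coweighting.
Qed.

Lemma euler_fiber b : euler (zeta_fiber P b) = sum_inv_outdeg b.
Proof.
have [_ fiber_coweighted] := fiber_has_euler b.
rewrite (euler_weighting (fiber_weighting (b := b)) fiber_coweighted).
exact: (sum_fiber_ob b (fun e => (outdeg e)%:R^-1)).
Qed.

Lemma sum_inv_outdeg_indeg b : sum_inv_outdeg b = sum_inv_indeg b.
Proof.
rewrite /sum_inv_outdeg /sum_inv_indeg.
rewrite -(sum_fiber_ob b (fun e => (outdeg e)%:R^-1)).
rewrite -(sum_fiber_ob b (fun e => (indeg e)%:R^-1)).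
exact: weighting_coweighting_sum (fiber_weighting (b := b))
  (fiber_coweighting (b := b)).
Qed.

Lemma sum_inv_indeg_hom b1 b2 (h : hom b1 b2) :
  sum_inv_indeg b1 = sum_inv_outdeg b2.
Proof.
transitivity (\sum_e' \sum_e'' \sum_(f : hom e' e'')
  (tmor (fmor P f) == tmor h)%:R * ((indeg e')%:R^-1 * (outdeg e'')%:R^-1) : rat).
  rewrite /sum_inv_indeg big_mkcond; apply: eq_bigr => e' _ /=.
  case: eqP => [Pe' | Pe']; last first.
    symmetry; apply: big1 => e'' _; apply: big1 => f _.
    by case: eqP => [/tmor_endpoints [] | _]; [| rewrite mul0r].
  under eq_bigr do under eq_bigr do rewrite mulrCA.
  under eq_bigr do rewrite -mulr_sumr.
  by rewrite -mulr_sumr (sum_over_div_outdeg h Pe') mulr1.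
rewrite exchange_big /sum_inv_outdeg [RHS]big_mkcond; apply: eq_bigr => e'' _ /=.
case: eqP => [Pe'' | Pe'']; last first.
  apply: big1 => e' _; apply: big1 => f _.
  by case: eqP => [/tmor_endpoints [] | _]; [| rewrite mul0r].
under eq_bigr do under eq_bigr do rewrite mulrA.
under eq_bigr do rewrite -mulr_suml.
by rewrite -mulr_suml (sum_over_div_indeg h Pe'') mul1r.
Qed.

Lemma sum_inv_outdeg_connected :
  fcat_connected B -> forall b b', sum_inv_outdeg b = sum_inv_outdeg b'.
Proof.
move=> Bconn b b'; move/connectP: (Bconn b b') => [p pP ->] {b'}.
elim: p b pP => [|b' p IHp] b //= /andP [bb' pP]; rewrite -(IHp b' pP).
have step b1 b2 (h : hom b1 b2) : sum_inv_outdeg b1 = sum_inv_outdeg b2.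
  by rewrite sum_inv_outdeg_indeg (sum_inv_indeg_hom h).
by case/orP: bb' => /card_gt0P [h _];
  [exact: step _ _ h | exact: esym (step _ _ h)].
Qed.

Lemma chi_total b : fcat_connected B -> fcat_has_euler E ->
  fcat_has_euler B -> chi E = chi B * sum_inv_outdeg b.
Proof.
move=> Bconn [_ EcE] [[w Bw] BcB].
rewrite /chi (euler_weighting (weighting_lift Bw) EcE).
rewrite (euler_weighting Bw BcB) mulr_suml.
rewrite (partition_big (fob P) predT) //=; apply: eq_bigr => b' _.
rewrite (sum_inv_outdeg_connected Bconn b b') mulr_sumr.
by apply: eq_bigr => e /eqP ->.
Qed.

End Fibration.

Theorem theorem2p9 (E B : fcat) (P : functor E B) (b : ob B) :
  fibered_in_groupoids P -> cofibered_in_groupoids P ->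
  fcat_connected B ->
  fcat_has_euler E -> fcat_has_euler B ->
  has_euler (zeta_fiber P b) /\
  chi E = chi B * euler (zeta_fiber P b).
Proof.
move=> [cart lift] [cocart colift] Bconn Eeuler Beuler.
split; first exact: fiber_has_euler.
rewrite (euler_fiber cart cocart).
exact: chi_total cart lift cocart colift b Bconn Eeuler Beuler.
Qed.
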